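(* Let $0<\sigma<\tau$, let $\kappa_\sigma,\kappa_2$ satisfy $0<\kappa_\sigma<\kappa_2<1$, and let $\omega_\sigma>0$. Let \[ \sigma<t_2\le\min\Bigl\{\sigma+\frac{\kappa_\sigma}{2\omega_\sigma},\,\tau\Bigr\},\qquad 0<\omega\le\frac{\kappa_2-\kappa_\sigma}{t_2-\sigma}, \] and \[ \mu^\star(\kappa_2,\kappa_\sigma,t_2,\omega_\sigma):=\frac{\kappa_2-\kappa_\sigma+(t_2-\sigma)\omega_\sigma}{g_*(\kappa_\sigma/2,\kappa_2)\int_\sigma^{t_2}A^-(\sigma,\xi)\,d\xi}. \] Then for every $\mu>\mu^\star(\kappa_2,\kappa_\sigma,t_2,\omega_\sigma)$, any solution $(x(t),y(t))$ on $[\sigma,\tau]$ of \[ x'=y,\qquad y'=\mu a^-(t)g(x) \] with $x(\sigma)=\kappa_\sigma$ and $y(\sigma)\ge-\omega_\sigma$ satisfies $x(t_2)>\kappa_2$ and $y(t_2)>\omega$.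
   Context: $a\in L^1(\sigma,\tau)$ with negative part $a^-\ge0$, and $A^-(t',t''):=\int_{t'}^{t''}a^-(\xi)\,d\xi$; it is assumed that $A^-(\sigma,t)>0$ for all $t\in(\sigma,\tau]$. $g\colon\mathbb{R}\to[0,+\infty)$ is the extension by zero outside $[0,1]$ of a locally Lipschitz continuous function $g\colon[0,1]\to[0,+\infty)$ with $g(0)=g(1)=0$, $g(s)>0$ for $0<s<1$ and $\lim_{s\to0^+}g(s)/s=0$. For $0\le\kappa'<\kappa''\le1$, $g_*(\kappa',\kappa''):=\min_{s\in[\kappa',\kappa'']}g(s)$. Solutions are in the Carathéodory sense. *)

From HB Require Import structures.
From mathcomp Require Import all_boot all_order all_algebra.
From mathcomp Require Import all_classical all_reals all_analysis.
Set Implicit Arguments. Unset Strict Implicit. Unset Printing Implicit Defensive.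
Import Order.TTheory GRing.Theory Num.Theory.
Import numFieldNormedType.Exports.
Local Open Scope classical_set_scope.
Local Open Scope ring_scope.

Notation leb := (@lebesgue_measure _).

Definition negpart {R : realType} (a : R -> R) : R -> R :=
  fun t => Num.max (- a t) 0.

Definition Aneg {R : realType} (a : R -> R) (t1 t2 : R) : R :=
  Rintegral leb `[t1, t2] (negpart a).

Definition g_hyp {R : realType} (g : R -> R) : Prop :=
  (forall s, (s < 0) || (1 < s) -> g s = 0) /\
  [/\ (forall s, 0 <= g s),
      (forall s, 0 <= s <= 1 -> exists2 d : R, 0 < d & exists L : R,
         forall u v, 0 <= u <= 1 -> 0 <= v <= 1 ->
           `|u - s| < d -> `|v - s| < d -> `|g u - g v| <= L * `|u - v|),
      g 0 = 0 /\ g 1 = 0,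
      (forall s, 0 < s < 1 -> 0 < g s) &
      (fun s => g s / s) x @[x --> 0^'+] --> (0 : R)].

(* g_*(k', k'') = min_{s in [k', k'']} g(s) (attained since g is continuous) *)
Definition gstar {R : realType} (g : R -> R) (k1 k2 : R) : R :=
  inf [set g s | s in `[k1, k2]].

(* Caratheodory solution on [sigma, tau] of x' = y, y' = mu a^-(t) g(x):
   x, y absolutely continuous with the equations a.e., written in the
   equivalent integral form with integrable right-hand sides. *)
Definition cara_sol {R : realType} (sigma tau mu : R) (a g : R -> R)
  (x y : R -> R) : Prop :=
  [/\ leb.-integrable `[sigma, tau] (EFin \o y),
      leb.-integrable `[sigma, tau] (fun t => (mu * negpart a t * g (x t))%:E),
      (forall t, sigma <= t <= tau ->
         x t = x sigma + Rintegral leb `[sigma, t] y) &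
      (forall t, sigma <= t <= tau ->
         y t = y sigma + Rintegral leb `[sigma, t]
                           (fun s => mu * negpart a s * g (x s)))].

Definition mustar {R : realType} (sigma : R) (a g : R -> R)
  (k2 ks t2 ws : R) : R :=
  (k2 - ks + (t2 - sigma) * ws) /
  (gstar g (ks / 2) k2 * Rintegral leb `[sigma, t2] (fun xi => Aneg a sigma xi)).

(* Since y' = mu a^- g(x) >= 0, y is nondecreasing and x is convex with slope y.
   Hence on [sigma, t2] the graph of x lies above the line of slope -ws through
   (sigma, ks), so x >= ks/2 there by the choice of t2.  If x(t2) <= k2, convexity
   keeps x below k2 on [sigma, t2], so g(x) >= g_*(ks/2, k2) there, and integrating
   y' twice gives x(t2) >= ks - ws (t2 - sigma) + mu g_* \int A^- > k2 for
   mu > mu^*, a contradiction.  Finally y(t2) dominates the mean slope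
   (x(t2) - ks) / (t2 - sigma) > (k2 - ks) / (t2 - sigma) >= w. *)

From HB Require Import structures.
From mathcomp Require Import all_boot all_order all_algebra.
From mathcomp Require Import all_classical all_reals all_analysis.
From mathcomp Require Import ring lra.
Set Implicit Arguments. Unset Strict Implicit. Unset Printing Implicit Defensive.
Import Order.TTheory GRing.Theory Num.Theory.
Import numFieldNormedType.Exports.
Local Open Scope classical_set_scope.
Local Open Scope ring_scope.

Section interval_integrals.
Context {R : realType}.
Implicit Types (f : R -> R) (r s t c : R).

Lemma integrable_cst_cc s t c : leb.-integrable `[s, t] (EFin \o fun=> c).
Proof.
apply: continuous_compact_integrable; first exact: segment_compact.
by apply: continuous_subspaceT => u; exact: cst_continuous.
Qed.

Lemma Rintegral_cst_cc s t c : s <= t -> Rintegral leb `[s, t] (fun=> c) = c * (t - s).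
Proof.
move=> st; rewrite Rintegral_cst //.
change (c * fine (leb `[s, t]) = c * (t - s)); rewrite lebesgue_measure_itv.
by rewrite /= lte_fin; case: ltgtP st => //= -> _; rewrite subrr.
Qed.

Lemma integrable_subitv_cc f r s t T : r <= s -> t <= T ->
  leb.-integrable `[r, T] (EFin \o f) -> leb.-integrable `[s, t] (EFin \o f).
Proof. by move=> rs tT; apply: integrableS => //; apply: subset_itv; rewrite bnd_simp. Qed.

Lemma Rintegral_cc_split f r s t : r <= s <= t ->
  leb.-integrable `[r, t] (EFin \o f) ->
  Rintegral leb `[r, t] f = Rintegral leb `[r, s] f + Rintegral leb `[s, t] f.
Proof.
move=> /andP[rs st] itf.
have itf' : leb.-integrable `]s, t] (EFin \o f).
  by apply: integrableS itf => //; apply: subset_itv; rewrite bnd_simp.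
rewrite -(@Rintegral_itv_obnd_cbnd _ s) // -(@Rintegral_itvB _ _ (BLeft r)) ?bnd_simp //.
by rewrite addrC subrK.
Qed.

Lemma ge_Rintegral_cst_cc f s t c : s <= t ->
  leb.-integrable `[s, t] (EFin \o f) -> {in `[s, t], forall u, c <= f u} ->
  c * (t - s) <= Rintegral leb `[s, t] f.
Proof.
move=> st itf cf; rewrite -Rintegral_cst_cc //.
by apply: le_Rintegral => //; exact: integrable_cst_cc.
Qed.

Lemma le_Rintegral_cst_cc f s t c : s <= t ->
  leb.-integrable `[s, t] (EFin \o f) -> {in `[s, t], forall u, f u <= c} ->
  Rintegral leb `[s, t] f <= c * (t - s).
Proof.
move=> st itf fc; rewrite -Rintegral_cst_cc //.
by apply: le_Rintegral => //; exact: integrable_cst_cc.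
Qed.

End interval_integrals.

Section negative_part.
Context {R : realType}.
Implicit Types (a : R -> R) (s t u v : R).

Lemma negpart_ge0 a u : 0 <= negpart a u.
Proof. by rewrite /negpart le_max lexx orbT. Qed.

Lemma integrable_negpart a s t : leb.-integrable `[s, t] (EFin \o a) ->
  leb.-integrable `[s, t] (EFin \o negpart a).
Proof.
move=> ia; apply: eq_integrable (integrable_funeneg _ ia) => // u _.
by rewrite funenegE /= /negpart EFin_max EFinN.
Qed.

Lemma Aneg_ge0 a s t : 0 <= Aneg a s t.
Proof. by apply: Rintegral_ge0 => u _; exact: negpart_ge0. Qed.

Lemma Aneg_le a s u v : s <= u <= v -> leb.-integrable `[s, v] (EFin \o a) ->
  Aneg a s u <= Aneg a s v.
Proof.
move=> suv ia; rewrite /Aneg (Rintegral_cc_split suv) //.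
  by rewrite lerDl; apply: Rintegral_ge0 => w _; exact: negpart_ge0.
exact: integrable_negpart.
Qed.

Lemma integrable_Aneg a s t : s <= t -> leb.-integrable `[s, t] (EFin \o a) ->
  leb.-integrable `[s, t] (EFin \o Aneg a s).
Proof.
move=> st ia; apply: continuous_compact_integrable; first exact: segment_compact.
by apply: parameterized_integral_continuous => //; exact: integrable_negpart.
Qed.

Lemma Rintegral_Aneg_gt0 a s t : s < t -> leb.-integrable `[s, t] (EFin \o a) ->
  {in `]s, t], forall u, 0 < Aneg a s u} ->
  0 < Rintegral leb `[s, t] (Aneg a s).
Proof.
move=> st ia Apos; set m := (s + t) / 2.
have smt : s <= m <= t by apply/andP; split; rewrite /m; lra.
have Am0 : 0 < Aneg a s m by apply: Apos; rewrite in_itv /= /m; apply/andP; split; lra.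
have iA := integrable_Aneg (ltW st) ia.
rewrite (Rintegral_cc_split smt iA).
have : Aneg a s m * (t - m) <= Rintegral leb `[m, t] (Aneg a s).
  apply: ge_Rintegral_cst_cc; first by case/andP: smt.
    by apply: integrable_subitv_cc iA; case/andP: smt.
  move=> u; rewrite in_itv /= => /andP[mu ut].
  apply: Aneg_le; first by rewrite mu andbT; case/andP: smt.
  exact: integrable_subitv_cc ia.
have : 0 < Aneg a s m * (t - m) by rewrite mulr_gt0 // subr_gt0 /m; lra.
have : 0 <= Rintegral leb `[s, m] (Aneg a s) by apply: Rintegral_ge0 => u _; exact: Aneg_ge0.
lra.
Qed.

End negative_part.

Section minimum_of_g.
Context {R : realType}.
Implicit Types (g : R -> R) (s : R).

Lemma g_hyp_continuous g s : g_hyp g -> 0 < s < 1 -> {for s, continuous g}.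
Proof.
move=> [_ [_ lip _ _ _]] /andP[s0 s1].
have [d d0 [L gL]] := lip s (ltac:(by rewrite !ltW)).
have L1 : 0 < `|L| + 1 by rewrite ltr_wpDl.
apply/cvgrPdist_le => e e0.
exists (Num.min (Num.min d s) (Num.min (1 - s) (e / (`|L| + 1)))).
  by rewrite /= !lt_min d0 s0 subr_gt0 s1 divr_gt0.
move=> t /=; rewrite !lt_min => /andP[/andP[std sts] /andP[st1 ste]].
have t01 : 0 <= t <= 1.
  by move: sts st1; rewrite !ltr_norml => /andP[? ?] /andP[? ?]; apply/andP; split; lra.
have s01 : 0 <= s <= 1 by rewrite !ltW.
have := gL s t s01 t01; rewrite subrr normr0 distrC => /(_ d0 std) gst.
apply: le_trans gst _.
have q0 : 0 <= e / (`|L| + 1) by rewrite divr_ge0 ?ltW.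
apply: le_trans (_ : `|L| * `|s - t| <= _); first by rewrite ler_wpM2r ?ler_norm.
apply: le_trans (_ : `|L| * (e / (`|L| + 1)) <= _); first by rewrite ler_wpM2l // ltW.
by rewrite -[leRHS](@divfK _ (`|L| + 1)) ?gt_eqF // mulrC ler_wpM2l // lerDl.
Qed.

Lemma gstar_le g k1 k2 s : (forall u, 0 <= g u) -> k1 <= s <= k2 ->
  gstar g k1 k2 <= g s.
Proof.
move=> g0 ks; apply: ge_inf; first by exists 0 => _ [u _ <-].
by exists s; rewrite // in_itv.
Qed.

Lemma gstar_gt0 g k1 k2 : g_hyp g -> 0 < k1 <= k2 -> k2 < 1 -> 0 < gstar g k1 k2.
Proof.
move=> hg /andP[k10 k12] k21.
have in01 u : u \in `[k1, k2] -> 0 < u < 1.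
  by rewrite in_itv /= => /andP[k1u uk2]; apply/andP; split; lra.
have cg : {within `[k1, k2], continuous g}.
  by apply: continuous_in_subspaceT => u /[!inE] /in01; exact: g_hyp_continuous.
have [c c12 gc] := EVT_min k12 cg.
have gc0 : 0 < g c by case: hg => _ [_ _ _ gpos _]; exact/gpos/in01.
apply: lt_le_trans gc0 _; apply: lb_le_inf; first by exists (g c), c.
by move=> _ [u u12 <-]; exact: gc.
Qed.

End minimum_of_g.

Lemma Rintegral_primitive_sub {R : realType} (F f : R -> R) r T s t :
  leb.-integrable `[r, T] (EFin \o f) ->
  (forall u, r <= u <= T -> F u = F r + Rintegral leb `[r, u] f) ->
  r <= s <= t -> t <= T -> F t - F s = Rintegral leb `[s, t] f.
Proof.
move=> itf hF /andP[rs st] tT.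
rewrite (hF t) ?(le_trans rs st) // (hF s) ?rs ?(le_trans st tT) //.
rewrite (@Rintegral_cc_split _ _ r s t) ?rs ?st //; first lra.
exact: integrable_subitv_cc itf.
Qed.

Section caratheodory_solution.
Context {R : realType}.
Variables (sigma tau mu : R) (a g x y : R -> R).
Hypotheses (sol : cara_sol sigma tau mu a g x y) (mu_ge0 : 0 <= mu)
  (g_ge0 : forall s, 0 <= g s).

Lemma cara_sol_x_sub s t : sigma <= s <= t -> t <= tau ->
  x t - x s = Rintegral leb `[s, t] y.
Proof. by case: sol => iy _ hx _; exact: Rintegral_primitive_sub. Qed.

Lemma cara_sol_y_sub s t : sigma <= s <= t -> t <= tau ->
  y t - y s = Rintegral leb `[s, t] (fun u => mu * negpart a u * g (x u)).
Proof. by case: sol => _ iF _ hy; exact: Rintegral_primitive_sub. Qed.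

Lemma cara_sol_y_le s t : sigma <= s <= t -> t <= tau -> y s <= y t.
Proof.
move=> sst tt; rewrite -subr_ge0 cara_sol_y_sub //.
by apply: Rintegral_ge0 => u _; rewrite !mulr_ge0 ?negpart_ge0.
Qed.

Lemma cara_sol_x_ge s t : sigma <= s <= t -> t <= tau -> x s + y s * (t - s) <= x t.
Proof.
move=> /andP[ss st] tt; rewrite -lerBrDl cara_sol_x_sub ?ss //.
apply: ge_Rintegral_cst_cc => //; first by case: sol => iy *; exact: integrable_subitv_cc iy.
move=> u; rewrite in_itv /= => /andP[su ut]; apply: cara_sol_y_le (le_trans ut tt).
by rewrite ss su.
Qed.

Lemma cara_sol_x_le s t : sigma <= s <= t -> t <= tau -> x t <= x s + y t * (t - s).
Proof.
move=> /andP[ss st] tt; rewrite -lerBlDl cara_sol_x_sub ?ss //.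
apply: le_Rintegral_cst_cc => //; first by case: sol => iy *; exact: integrable_subitv_cc iy.
move=> u; rewrite in_itv /= => /andP[su ut]; apply: cara_sol_y_le => //.
by rewrite ut (le_trans ss su).
Qed.

Lemma cara_sol_x_le_max s t : sigma <= s <= t -> t <= tau ->
  x s <= Num.max (x sigma) (x t).
Proof.
move=> /andP[ss st] tt; rewrite le_max.
have [ys_le0|ys_gt0] := leP (y s) 0.
  have sss : sigma <= sigma <= s by rewrite lexx ss.
  have := cara_sol_x_le sss (le_trans st tt).
  have : 0 <= s - sigma by rewrite subr_ge0.
  by move=> *; apply/orP; left; nra.
have sst : sigma <= s <= t by rewrite ss st.
have := cara_sol_x_ge sst tt.
have : 0 <= t - s by rewrite subr_ge0.
by move=> *; apply/orP; right; nra.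
Qed.

Lemma cara_sol_x_ge_drift ws t : 0 <= ws -> - ws <= y sigma -> t <= tau ->
  {in `[sigma, t], forall u, x sigma - ws * (t - sigma) <= x u}.
Proof.
move=> ws0 ys tt u; rewrite in_itv /= => /andP[su ut].
have ssu : sigma <= sigma <= u by rewrite lexx su.
have := cara_sol_x_ge ssu (le_trans ut tt).
have : 0 <= (y sigma + ws) * (u - sigma) by rewrite mulr_ge0 ?subr_ge0 // -lerBlDr sub0r.
have : 0 <= ws * (t - u) by rewrite mulr_ge0 ?subr_ge0.
lra.
Qed.

Lemma cara_sol_secant_lt_y w t : sigma < t -> t <= tau ->
  x sigma + w * (t - sigma) < x t -> w < y t.
Proof.
move=> st tt secant; have sst : sigma <= sigma <= t by rewrite lexx ltW.
have := cara_sol_x_le sst tt.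
by rewrite -subr_gt0 -(pmulr_lgt0 _ (_ : 0 < t - sigma)) ?subr_gt0 // mulrBl; lra.
Qed.

Section escape.
Hypothesis integrable_a : leb.-integrable `[sigma, tau] (EFin \o a).

Lemma cara_sol_y_ge_Aneg c t : sigma <= t <= tau ->
  {in `[sigma, t], forall u, c <= g (x u)} ->
  y sigma + mu * c * Aneg a sigma t <= y t.
Proof.
move=> /andP[st tt] cg; rewrite -lerBrDl cara_sol_y_sub ?lexx ?st //.
have ineg : leb.-integrable `[sigma, t] (EFin \o negpart a).
  by apply: integrable_negpart; exact: integrable_subitv_cc integrable_a.
rewrite /Aneg -RintegralZl //; apply: le_Rintegral => //.
- by apply: eq_integrable (integrableZl _ (mu * c) ineg) => //= v _; rewrite EFinM.
- by case: sol => _ iF *; exact: integrable_subitv_cc iF.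
move=> u /cg cgu; rewrite -!mulrA ler_wpM2l // mulrC ler_wpM2l //.
exact: negpart_ge0.
Qed.

Lemma cara_sol_x_ge_Aneg c t : sigma <= t <= tau ->
  {in `[sigma, t], forall u, c <= g (x u)} ->
  x sigma + y sigma * (t - sigma) + mu * c * Rintegral leb `[sigma, t] (Aneg a sigma)
    <= x t.
Proof.
move=> /andP[st tt] cg.
have iA := integrable_Aneg st (integrable_subitv_cc (lexx _) tt integrable_a).
rewrite -addrA -lerBrDl cara_sol_x_sub ?lexx ?st //.
rewrite -(Rintegral_cst_cc (y sigma) st) -RintegralZl // -RintegralD //; last first.
  - by apply: eq_integrable (integrableZl _ (mu * c) iA) => //= v _; rewrite EFinM.
  - exact: integrable_cst_cc.
apply: le_Rintegral => //.
- by apply: eq_integrable (integrableD _ (integrable_cst_cc _ _ (y sigma))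
    (integrableZl _ (mu * c) iA)) => //= v _.
- by case: sol => iy *; exact: integrable_subitv_cc iy.
move=> u /=; rewrite in_itv /= => /andP[su ut]; apply: cara_sol_y_ge_Aneg.
  by rewrite su (le_trans ut tt).
move=> v; rewrite in_itv /= => /andP[sv vu]; apply: cg.
by rewrite in_itv /= sv (le_trans vu ut).
Qed.

Lemma cara_sol_escape k1 k2 c t : sigma <= t <= tau -> x sigma <= k2 ->
  {in `[sigma, t], forall u, k1 <= x u} -> {in `[k1, k2], forall s, c <= g s} ->
  k2 < x sigma + y sigma * (t - sigma) + mu * c * Rintegral leb `[sigma, t] (Aneg a sigma) ->
  k2 < x t.
Proof.
move=> /andP[st tt] xs_le xk1 cg lb; rewrite ltNge; apply/negP => xt_le.
have cgx : {in `[sigma, t], forall u, c <= g (x u)}.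
  move=> u ut; apply: cg; rewrite in_itv /= xk1 //=.
  move: ut; rewrite in_itv /= => /andP[su ut].
  apply: le_trans (cara_sol_x_le_max _ tt) _; first by rewrite su ut.
  by rewrite ge_max xs_le xt_le.
have := cara_sol_x_ge_Aneg _ cgx; rewrite st tt => /(_ isT).
lra.
Qed.

End escape.

End caratheodory_solution.

Theorem lemma2p7 (R : realType) (sigma tau : R) (a g : R -> R)
  (ks k2 ws t2 w mu : R) (x y : R -> R) :
  0 < sigma -> sigma < tau ->
  (@lebesgue_measure R).-integrable `[sigma, tau] (EFin \o a) ->
  (forall t, sigma < t <= tau -> 0 < Aneg a sigma t) ->
  g_hyp g ->
  0 < ks -> ks < k2 -> k2 < 1 -> 0 < ws ->
  sigma < t2 -> t2 <= Num.min (sigma + ks / (2 * ws)) tau ->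
  0 < w -> w <= (k2 - ks) / (t2 - sigma) ->
  mustar sigma a g k2 ks t2 ws < mu ->
  cara_sol sigma tau mu a g x y ->
  x sigma = ks -> - ws <= y sigma ->
  k2 < x t2 /\ w < y t2.
Proof.
move=> _ _ ia Apos hg ks0 ksk2 k21 ws0 st2 t2_le _ w_le mu_gt sol xs ys.
move: t2_le; rewrite le_min => /andP[t2_ks t2_tau].
have d0 : 0 < t2 - sigma by rewrite subr_gt0.
have g_ge0 : forall s, 0 <= g s by case: hg => _ [].
set G := gstar g (ks / 2) k2.
set I := Rintegral leb `[sigma, t2] (Aneg a sigma).
have G0 : 0 < G by apply: gstar_gt0 => //; apply/andP; split; lra.
have I0 : 0 < I.
  apply: Rintegral_Aneg_gt0 => //; first exact: integrable_subitv_cc ia.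
  by move=> u; rewrite in_itv /= => /andP[su ut2]; apply: Apos; rewrite su (le_trans ut2).
have N_lt : k2 - ks + (t2 - sigma) * ws < mu * (G * I).
  by rewrite -ltr_pdivrMr ?mulr_gt0.
have mu_ge0 : 0 <= mu.
  apply: ltW; rewrite -(pmulr_lgt0 _ (mulr_gt0 G0 I0)); apply: le_lt_trans N_lt.
  by have := mulr_gt0 d0 ws0; lra.
have drift : ws * (t2 - sigma) <= ks / 2.
  have -> : ks / 2 = ws * (ks / (2 * ws)) by field; rewrite gt_eqF.
  by rewrite (ler_wpM2l (ltW ws0)) // lerBlDl.
have xt2 : k2 < x t2.
  apply: (cara_sol_escape sol mu_ge0 g_ge0 ia _ _ _ (k1 := ks / 2)); rewrite ?xs.
  - by rewrite (ltW st2) t2_tau.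
  - exact: ltW.
  - move=> u /(cara_sol_x_ge_drift sol mu_ge0 g_ge0 (ltW ws0) ys t2_tau).
    by rewrite xs; lra.
  - by move=> s; rewrite in_itv /=; exact: gstar_le.
  have : - ws * (t2 - sigma) <= y sigma * (t2 - sigma) by rewrite (ler_wpM2r (ltW d0)).
  rewrite mulrA in N_lt; rewrite -/G -/I; lra.
split => //; apply: (cara_sol_secant_lt_y sol mu_ge0 g_ge0 st2 t2_tau).
by move: w_le; rewrite ler_pdivlMr // xs; lra.
Qed.
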